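(* Let $R$ be a commutative Noetherian ring and let $a_{ij},\ell_{ij}$ ($1\le i\le 2$, $1\le j\le 3$), $\psi_{12},\psi_{13},\psi_{23},z_1,z_2$ be elements of $R$. Let $\mathbb Q$ be the sequence of $R$-module homomorphisms $$0\to R^2\xrightarrow{q_3}R^6\xrightarrow{q_2}R^5\xrightarrow{q_1}R$$ given by the matrices described below. Then $\mathbb Q$ is a complex (i.e. $q_1q_2=0$ and $q_2q_3=0$). Furthermore, if the ideal of $R$ generated by the five entries of $q_1$ has grade at least three, then $\mathbb Q$ is acyclic (i.e. $\operatorname{H}_j(\mathbb Q)=0$ for $j\ge 1$).
   Context: Write $A=(a_{ij})$ and $L=(\ell_{ij})$ for the $2\times 3$ matrices, $P=(\psi_{23},-\psi_{13},\psi_{12})^{\rm T}$, $[ij|kl]_{a\ell}$ notation is avoided; instead write $N=\sum_{i=1}^3(a_{1i}\ell_{2i}-a_{2i}\ell_{1i})$. The $1\times 5$ matrix is $q_1=[\,g_1\ g_2\ g_3\ g_4\ g_5\,]$ with $g_1=-\det\begin{bmatrix}\psi_{23}&-\psi_{13}&\psi_{12}\\ \ell_{11}&\ell_{12}&\ell_{13}\\ \ell_{21}&\ell_{22}&\ell_{23}\end{bmatrix}-z_2N-z_2z_1$, $g_2=P^{\rm T}A^{\rm T}\begin{bmatrix}\ell_{21}\\-\ell_{11}\end{bmatrix}-z_2(a_{12}a_{23}-a_{13}a_{22})+z_1\psi_{23}$, $g_3=P^{\rm T}A^{\rm T}\begin{bmatrix}\ell_{22}\\-\ell_{12}\end{bmatrix}+z_2(a_{11}a_{23}-a_{13}a_{21})-z_1\psi_{13}$,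 $g_4=P^{\rm T}A^{\rm T}\begin{bmatrix}\ell_{23}\\-\ell_{13}\end{bmatrix}-z_2(a_{11}a_{22}-a_{12}a_{21})+z_1\psi_{12}$, $g_5=-\det(AL^{\rm T})-z_1N-z_1^2$. The $5\times 6$ matrix $q_2$ has columns $C_1,\dots,C_6$ (entries listed from row 1 to row 5): $C_1=(\psi_{12}a_{23}-\psi_{13}a_{22}+\psi_{23}a_{21},\ -\ell_{22}\psi_{12}-\ell_{23}\psi_{13}+z_2a_{21},\ \ell_{21}\psi_{12}-\ell_{23}\psi_{23}+z_2a_{22},\ \ell_{21}\psi_{13}+\ell_{22}\psi_{23}+z_2a_{23},\ 0)$; $C_2=(-\psi_{12}a_{13}+\psi_{13}a_{12}-\psi_{23}a_{11},\ \psi_{12}\ell_{12}+\psi_{13}\ell_{13}-z_2a_{11},\ -\psi_{12}\ell_{11}+\psi_{23}\ell_{13}-z_2a_{12},\ -\psi_{13}\ell_{11}-\psi_{23}\ell_{12}-z_2a_{13},\ 0)$; $C_3=(z_1,\ \ell_{12}\ell_{23}-\ell_{13}\ell_{22},\ -(\ell_{11}\ell_{23}-\ell_{13}\ell_{21}),\ \ell_{11}\ell_{22}-\ell_{12}\ell_{21},\ -z_2)$; $C_4=(a_{12}a_{23}-a_{13}a_{22},\ -(a_{12}\ell_{22}-a_{22}\ell_{12})-(a_{13}\ell_{23}-a_{23}\ell_{13})-z_1,\ a_{12}\ell_{21}-a_{22}\ell_{11},\ a_{13}\ell_{21}-a_{23}\ell_{11},\ -\psi_{23})$; $C_5=(-(a_{11}a_{23}-a_{13}a_{21}),\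 a_{11}\ell_{22}-a_{21}\ell_{12},\ -(a_{11}\ell_{21}-a_{21}\ell_{11})-(a_{13}\ell_{23}-a_{23}\ell_{13})-z_1,\ a_{13}\ell_{22}-a_{23}\ell_{12},\ \psi_{13})$; $C_6=(a_{11}a_{22}-a_{12}a_{21},\ a_{11}\ell_{23}-a_{21}\ell_{13},\ a_{12}\ell_{23}-a_{22}\ell_{13},\ -(a_{11}\ell_{21}-a_{21}\ell_{11})-(a_{12}\ell_{22}-a_{22}\ell_{12})-z_1,\ -\psi_{12})$. The $6\times 2$ matrix $q_3$ has rows (first column entry; second column entry): row 1: $a_{11}\ell_{11}+a_{12}\ell_{12}+a_{13}\ell_{13}$; $a_{11}\ell_{21}+a_{12}\ell_{22}+a_{13}\ell_{23}+z_1$; row 2: $a_{21}\ell_{11}+a_{22}\ell_{12}+a_{23}\ell_{13}-z_1$; $a_{21}\ell_{21}+a_{22}\ell_{22}+a_{23}\ell_{23}$; row 3: $-a_{11}\psi_{23}+a_{12}\psi_{13}-a_{13}\psi_{12}$; $-a_{21}\psi_{23}+a_{22}\psi_{13}-a_{23}\psi_{12}$; row 4: $-\ell_{12}\psi_{12}-\ell_{13}\psi_{13}+z_2a_{11}$; $-\ell_{22}\psi_{12}-\ell_{23}\psi_{13}+z_2a_{21}$; row 5: $\ell_{11}\psi_{12}-\ell_{13}\psi_{23}+z_2a_{12}$; $\ell_{21}\psi_{12}-\ell_{23}\psi_{23}+z_2a_{22}$; row 6: $\ell_{11}\psi_{13}+\ell_{12}\psi_{23}+z_2a_{13}$; $\ell_{21}\psi_{13}+\ell_{22}\psi_{23}+z_2a_{23}$.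 (This is the matrix form, with respect to fixed bases, of the paper's coordinate-free complex built from maps $\phi:F\to G$, $\ell:F^*\to G$, $\psi\in\bigwedge^2F^*$, $\zeta=z_1\beta_1\wedge\beta_2\in\bigwedge^2G$, $z_2\in R$ with $\operatorname{rank}F=3$, $\operatorname{rank}G=2$.) A complex $\cdots\to C_1\to C_0\to 0$ is acyclic if $\operatorname{H}_j=0$ for all $j\ge1$. *)

From HB Require Import structures.
From mathcomp Require Import all_boot all_order all_algebra.
Set Implicit Arguments. Unset Strict Implicit. Unset Printing Implicit Defensive.
Import GRing.Theory.
Local Open Scope ring_scope.

Section Defs.
Variable R : comPzRingType.

Definition in_ideal (s : seq R) (x : R) : Prop :=
  exists c : 'I_(size s) -> R, x = \sum_(i < size s) c i * s`_i.

Definition is_ideal (I : R -> Prop) : Prop :=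
  [/\ I 0, (forall x y, I x -> I y -> I (x + y)) & (forall r x, I x -> I (r * x))].

Definition noetherian : Prop :=
  forall I : R -> Prop, is_ideal I -> exists s : seq R, forall x, I x <-> in_ideal s x.

Definition weakly_regular (s : seq R) : Prop :=
  forall k : nat, (k < size s)%N ->
    forall y : R, in_ideal (take k s) (s`_k * y) -> in_ideal (take k s) y.

(** grade I >= n : I contains an R-regular sequence of length n
    (with the convention grade R = infinity, which is automatic here). *)
Definition grade_ge (I : R -> Prop) (n : nat) : Prop :=
  exists s : seq R, [/\ size s = n, (forall x, x \in s -> I x) & weakly_regular s].

Definition mxl (m n : nat) (s : seq (seq R)) : 'M[R]_(m, n) :=
  \matrix_(i < m, j < n) nth 0 (nth [::] s i) j.

Definition acyclic3 (m0 m1 m2 m3 : nat) (d1 : 'M[R]_(m0, m1))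
    (d2 : 'M[R]_(m1, m2)) (d3 : 'M[R]_(m2, m3)) : Prop :=
  [/\ (forall v : 'cV[R]_m1, d1 *m v = 0 -> exists w : 'cV[R]_m2, v = d2 *m w),
      (forall v : 'cV[R]_m2, d2 *m v = 0 -> exists w : 'cV[R]_m3, v = d3 *m w)
    & (forall v : 'cV[R]_m3, d3 *m v = 0 -> v = 0)].

Variables (a11 a12 a13 a21 a22 a23 l11 l12 l13 l21 l22 l23
           p12 p13 p23 z1 z2 : R).

Definition Amx : 'M[R]_(2, 3) := mxl 2 3 [:: [:: a11; a12; a13]; [:: a21; a22; a23]].
Definition Lmx : 'M[R]_(2, 3) := mxl 2 3 [:: [:: l11; l12; l13]; [:: l21; l22; l23]].
Definition Pmx : 'cV[R]_3 := mxl 3 1 [:: [:: p23]; [:: - p13]; [:: p12]].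
Definition Nq : R := (a11 * l21 - a21 * l11) + (a12 * l22 - a22 * l12) + (a13 * l23 - a23 * l13).

Definition PAv (u v : R) : R := ((Pmx^T *m Amx^T) *m mxl 2 1 [:: [:: u]; [:: v]]) ord0 ord0.

Definition g1 : R :=
  - \det (mxl 3 3 [:: [:: p23; - p13; p12]; [:: l11; l12; l13]; [:: l21; l22; l23]])
  - z2 * Nq - z2 * z1.
Definition g2 : R := PAv l21 (- l11) - z2 * (a12 * a23 - a13 * a22) + z1 * p23.
Definition g3 : R := PAv l22 (- l12) + z2 * (a11 * a23 - a13 * a21) - z1 * p13.
Definition g4 : R := PAv l23 (- l13) - z2 * (a11 * a22 - a12 * a21) + z1 * p12.
Definition g5 : R := - \det (Amx *m Lmx^T) - z1 * Nq - z1 ^+ 2.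

Definition q1 : 'M[R]_(1, 5) := mxl 1 5 [:: [:: g1; g2; g3; g4; g5]].

Definition q2 : 'M[R]_(5, 6) := (mxl 6 5 [::
  [:: p12 * a23 - p13 * a22 + p23 * a21;
      - l22 * p12 - l23 * p13 + z2 * a21;
      l21 * p12 - l23 * p23 + z2 * a22;
      l21 * p13 + l22 * p23 + z2 * a23; 0];
  [:: - p12 * a13 + p13 * a12 - p23 * a11;
      p12 * l12 + p13 * l13 - z2 * a11;
      - p12 * l11 + p23 * l13 - z2 * a12;
      - p13 * l11 - p23 * l12 - z2 * a13; 0];
  [:: z1; l12 * l23 - l13 * l22; - (l11 * l23 - l13 * l21); l11 * l22 - l12 * l21; - z2];
  [:: a12 * a23 - a13 * a22;
      - (a12 * l22 - a22 * l12) - (a13 * l23 - a23 * l13) - z1;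
      a12 * l21 - a22 * l11; a13 * l21 - a23 * l11; - p23];
  [:: - (a11 * a23 - a13 * a21); a11 * l22 - a21 * l12;
      - (a11 * l21 - a21 * l11) - (a13 * l23 - a23 * l13) - z1;
      a13 * l22 - a23 * l12; p13];
  [:: a11 * a22 - a12 * a21; a11 * l23 - a21 * l13; a12 * l23 - a22 * l13;
      - (a11 * l21 - a21 * l11) - (a12 * l22 - a22 * l12) - z1; - p12]])^T.

Definition q3 : 'M[R]_(6, 2) := mxl 6 2 [::
  [:: a11 * l11 + a12 * l12 + a13 * l13; a11 * l21 + a12 * l22 + a13 * l23 + z1];
  [:: a21 * l11 + a22 * l12 + a23 * l13 - z1; a21 * l21 + a22 * l22 + a23 * l23];
  [:: - a11 * p23 + a12 * p13 - a13 * p12; - a21 * p23 + a22 * p13 - a23 * p12];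
  [:: - l12 * p12 - l13 * p13 + z2 * a11; - l22 * p12 - l23 * p13 + z2 * a21];
  [:: l11 * p12 - l13 * p23 + z2 * a12; l21 * p12 - l23 * p23 + z2 * a22];
  [:: l11 * p13 + l12 * p23 + z2 * a13; l21 * p13 + l22 * p23 + z2 * a23]].

End Defs.

(* Each entry g_j of q1 acts null-homotopically on Q: there are maps h3, h2
   and h1 = e_j with h3 q3 = g_j, q3 h3 + h2 q2 = g_j and q2 h2 + e_j q1 = g_j.
   Hence every x in the ideal I(q1) kills the homology of Q in the strong sense
   that x times a cycle is a boundary.  A diagram chase then shows that a
   regular sequence x1, x2, x3 of such elements forces H3 = H2 = H1 = 0: x1
   alone gives H3 = 0, x1 and x2 give H2 = 0, and for H1 one needs the Koszul
   type fact that a preimage under q3 of x1 a + x2 b lies in x1 R^2 + x2 R^2,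
   which is where x3 enters. *)

From HB Require Import structures.
From mathcomp Require Import all_boot all_order all_algebra.
From mathcomp Require Import ring.
Set Implicit Arguments. Unset Strict Implicit. Unset Printing Implicit Defensive.
Import GRing.Theory.
Local Open Scope ring_scope.

Section RegularSequences.
Variable R : comPzRingType.
Implicit Types (s : seq R).

Lemma weakly_regular_cancel x1 s y :
  weakly_regular (x1 :: s) -> x1 * y = 0 -> y = 0.
Proof.
move=> reg x1y0; have [|c ->] := reg 0%N erefl y; last by rewrite big_ord0.
by exists (fun=> 0); rewrite /= big_ord0.
Qed.

Lemma weakly_regular_second x1 x2 s y c :
  weakly_regular (x1 :: x2 :: s) -> x2 * y = x1 * c -> exists c', y = x1 * c'.
Proof.
move=> reg x2y; have [|c' ->] := reg 1%N erefl y.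
  by exists (fun=> c); rewrite /= big_ord1 x2y mulrC.
by exists (c' 0); rewrite big_ord1 mulrC.
Qed.

Lemma weakly_regular_third x1 x2 x3 s y a b :
  weakly_regular (x1 :: x2 :: x3 :: s) -> x3 * y = x1 * a + x2 * b ->
  exists a' b', y = x1 * a' + x2 * b'.
Proof.
move=> reg x3y; have [|c ->] := reg 2%N erefl y.
  exists (fun i : 'I_2 => if i == 0 then a else b).
  by rewrite /= big_ord_recr big_ord1 /= x3y [a * _]mulrC [b * _]mulrC.
exists (c 0), (c 1); rewrite big_ord_recr big_ord1 /= !(mulrC (c _)).
by congr (_ * c _ + _ * c _); exact: val_inj.
Qed.

Variables m n : nat.
Implicit Types A B C : 'M[R]_(m, n).

Lemma weakly_regular_scalemx_inj x1 s A B :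
  weakly_regular (x1 :: s) -> x1 *: A = x1 *: B -> A = B.
Proof.
move=> reg /matrixP xAB; apply/matrixP => i j; apply/eqP; rewrite -subr_eq0.
apply/eqP/(weakly_regular_cancel reg); apply/eqP.
by rewrite mulrBr subr_eq0; have := xAB i j; rewrite !mxE => ->.
Qed.

Lemma weakly_regular_second_mx x1 x2 s A B :
  weakly_regular (x1 :: x2 :: s) -> x2 *: A = x1 *: B -> exists C, A = x1 *: C.
Proof.
move=> reg /matrixP xAB.
have Aij (ij : 'I_m * 'I_n) : exists c, A ij.1 ij.2 = x1 * c.
  apply: (weakly_regular_second (c := B ij.1 ij.2) reg).
  by have := xAB ij.1 ij.2; rewrite !mxE.
have [c Ac] := fin_all_exists Aij.
by exists (\matrix_(i, j) c (i, j)); apply/matrixP => i j; rewrite !mxE (Ac (i, j)).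
Qed.

Lemma weakly_regular_third_mx x1 x2 x3 s A B C :
  weakly_regular (x1 :: x2 :: x3 :: s) -> x3 *: A = x1 *: B + x2 *: C ->
  exists B' C', A = x1 *: B' + x2 *: C'.
Proof.
move=> reg /matrixP xABC.
have Aij (ij : 'I_m * 'I_n) : exists c : R * R, A ij.1 ij.2 = x1 * c.1 + x2 * c.2.
  have [|a [b ->]] := weakly_regular_third (y := A ij.1 ij.2)
    (a := B ij.1 ij.2) (b := C ij.1 ij.2) reg.
    by have := xABC ij.1 ij.2; rewrite !mxE.
  by exists (a, b).
have [c Ac] := fin_all_exists Aij.
exists (\matrix_(i, j) (c (i, j)).1), (\matrix_(i, j) (c (i, j)).2).
by apply/matrixP => i j; rewrite !mxE (Ac (i, j)).
Qed.

End RegularSequences.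

Section KillingHomology.
Variables (R : comPzRingType) (m0 m1 m2 m3 : nat).
Variables (d1 : 'M[R]_(m0, m1)) (d2 : 'M[R]_(m1, m2)) (d3 : 'M[R]_(m2, m3)).

Definition kills_homology (x : R) : Prop :=
  [/\ forall v : 'cV_m3, d3 *m v = 0 -> x *: v = 0,
      forall v : 'cV_m2, d2 *m v = 0 -> exists w, x *: v = d3 *m w
    & forall v : 'cV_m1, d1 *m v = 0 -> exists w, x *: v = d2 *m w].

Lemma kills_homology0 : kills_homology 0.
Proof.
by split=> v _; rewrite scale0r //; exists 0; rewrite mulmx0.
Qed.

Lemma kills_homologyD x y :
  kills_homology x -> kills_homology y -> kills_homology (x + y).
Proof.
move=> [x3 x2 x1] [y3 y2 y1]; split=> v dv0; rewrite scalerDl.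
- by rewrite x3 ?y3 ?addr0.
- by have [[w ->] [w' ->]] := (x2 v dv0, y2 v dv0); exists (w + w'); rewrite mulmxDr.
- by have [[w ->] [w' ->]] := (x1 v dv0, y1 v dv0); exists (w + w'); rewrite mulmxDr.
Qed.

Lemma kills_homologyMl c x : kills_homology x -> kills_homology (c * x).
Proof.
move=> [x3 x2 x1]; split=> v dv0; rewrite -scalerA.
- by rewrite x3 ?scaler0.
- by have [w ->] := x2 v dv0; exists (c *: w); rewrite scalemxAr.
- by have [w ->] := x1 v dv0; exists (c *: w); rewrite scalemxAr.
Qed.

Lemma kills_homology_in_ideal s x :
  (forall y, y \in s -> kills_homology y) -> in_ideal s x -> kills_homology x.
Proof.
move=> ks [c ->]; apply: (big_ind kills_homology kills_homology0 kills_homologyD).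
by move=> i _; apply/kills_homologyMl/ks/mem_nth.
Qed.

Lemma kills_homology_of_homotopy x (h1 : 'M_(m1, m0)) (h2 : 'M_(m2, m1))
    (h3 : 'M_(m3, m2)) :
  h3 *m d3 = x%:M -> d3 *m h3 + h2 *m d2 = x%:M -> d2 *m h2 + h1 *m d1 = x%:M ->
  kills_homology x.
Proof.
have scale_eq (k : nat) (A : 'M_k) (v : 'cV_k) : A = x%:M -> x *: v = A *m v.
  by move->; rewrite mul_scalar_mx.
move=> e3 e2 e1; split=> v dv0.
- by rewrite (scale_eq _ _ _ e3) -mulmxA dv0 mulmx0.
- by exists (h3 *m v); rewrite (scale_eq _ _ _ e2) mulmxDl -!mulmxA dv0 mulmx0 addr0.
- by exists (h2 *m v); rewrite (scale_eq _ _ _ e1) mulmxDl -!mulmxA dv0 mulmx0 addr0.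
Qed.

Hypotheses (d1d2 : d1 *m d2 = 0) (d2d3 : d2 *m d3 = 0).

Section RegularKillers.
Variables x1 x2 x3 : R.
Hypothesis reg : weakly_regular [:: x1; x2; x3].
Hypotheses (k1 : kills_homology x1) (k2 : kills_homology x2) (k3 : kills_homology x3).

Lemma ker_d3_eq0 (v : 'cV_m3) : d3 *m v = 0 -> v = 0.
Proof.
case: k1 => k13 _ _ /k13 x1v0.
by apply: (weakly_regular_scalemx_inj reg); rewrite x1v0 scaler0.
Qed.

Lemma ker_d2_sub_im_d3 (v : 'cV_m2) : d2 *m v = 0 -> exists w, v = d3 *m w.
Proof.
case: k1 k2 => _ k12 _ [_ k22 _] d2v0.
have [[w1 e1] [w2 e2]] := (k12 v d2v0, k22 v d2v0).
have w12 : x2 *: w1 = x1 *: w2.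
  apply/eqP; rewrite -subr_eq0; apply/eqP/ker_d3_eq0.
  by rewrite mulmxBr -!scalemxAr -e1 -e2 !scalerA mulrC subrr.
have [u w1E] := weakly_regular_second_mx reg w12.
by exists u; apply: (weakly_regular_scalemx_inj reg); rewrite e1 w1E scalemxAr.
Qed.

Lemma d3_preimage_of_combination (t : 'cV_m3) (a b : 'cV_m2) :
  d3 *m t = x1 *: a + x2 *: b -> exists t1 t2, t = x1 *: t1 + x2 *: t2.
Proof.
move=> d3t.
have d2ab : x1 *: (d2 *m a) + x2 *: (d2 *m b) = 0.
  by rewrite !scalemxAr -mulmxDr -d3t mulmxA d2d3 mul0mx.
have [c d2b] : exists c, d2 *m b = x1 *: c.
  apply: (weakly_regular_second_mx (B := - (d2 *m a)) reg).
  by apply/eqP; rewrite scalerN -addr_eq0 addrC d2ab.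
have d2a : d2 *m a = - (x2 *: c).
  apply: (weakly_regular_scalemx_inj reg).
  by rewrite scalerN scalerA mulrC -scalerA -d2b; apply/eqP; rewrite -addr_eq0 d2ab.
have d1c : d1 *m c = 0.
  apply: (weakly_regular_scalemx_inj reg).
  by rewrite scalemxAr -d2b mulmxA d1d2 mul0mx scaler0.
case: k3 => _ _ k31; have [e ce] := k31 c d1c.
have [f fE] : exists f, x3 *: b - x1 *: e = d3 *m f.
  apply: ker_d2_sub_im_d3.
  by rewrite mulmxBr -!scalemxAr d2b -ce !scalerA mulrC subrr.
have [f' f'E] : exists f', x3 *: a + x2 *: e = d3 *m f'.
  apply: ker_d2_sub_im_d3.
  by rewrite mulmxDr -!scalemxAr d2a -ce scalerN !scalerA mulrC addNr.
apply: (weakly_regular_third_mx (B := f') (C := f) reg).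
apply/eqP; rewrite -subr_eq0; apply/eqP/ker_d3_eq0.
rewrite mulmxBr mulmxDr -!scalemxAr -fE -f'E d3t.
by apply/matrixP => i j; rewrite !mxE; ring.
Qed.

Lemma ker_d1_sub_im_d2 (v : 'cV_m1) : d1 *m v = 0 -> exists w, v = d2 *m w.
Proof.
case: k1 k2 => _ _ k11 [_ _ k21] d1v0.
have [[w1 e1] [w2 e2]] := (k11 v d1v0, k21 v d1v0).
have [t tE] : exists t, x2 *: w1 - x1 *: w2 = d3 *m t.
  apply: ker_d2_sub_im_d3.
  by rewrite mulmxBr -!scalemxAr -e1 -e2 !scalerA mulrC subrr.
have [t1 [t2 tE12]] : exists t1 t2, t = x1 *: t1 + x2 *: t2.
  apply: (d3_preimage_of_combination (a := - w2) (b := w1)).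
  by rewrite -tE scalerN addrC.
have w12 : x2 *: (w1 - d3 *m t2) = x1 *: (w2 + d3 *m t1).
  apply/eqP; rewrite -subr_eq0; apply/eqP.
  rewrite (_ : _ - _ = x2 *: w1 - x1 *: w2 - (x1 *: (d3 *m t1) + x2 *: (d3 *m t2))).
    by rewrite tE tE12 mulmxDr -!scalemxAr subrr.
  by rewrite scalerBr scalerDr; apply/matrixP => i j; rewrite !mxE; ring.
have [u uE] := weakly_regular_second_mx reg w12.
exists u; apply: (weakly_regular_scalemx_inj reg).
by rewrite e1 -(subrK (d3 *m t2) w1) uE mulmxDr mulmxA d2d3 mul0mx addr0 scalemxAr.
Qed.

Lemma acyclic3_of_regular_killers : acyclic3 d1 d2 d3.
Proof. by split; [exact: ker_d1_sub_im_d2 | exact: ker_d2_sub_im_d3 | exact: ker_d3_eq0]. Qed.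

End RegularKillers.

Lemma acyclic3_of_grade_killers (I : R -> Prop) :
  (forall x, I x -> kills_homology x) -> grade_ge I 3 -> acyclic3 d1 d2 d3.
Proof.
move=> kI [s [+ sI reg]]; case: s sI reg => [|x1 [|x2 [|x3 [|? ?]]]] // sI reg _.
by apply: (acyclic3_of_regular_killers reg); apply/kI/sI; rewrite !inE eqxx ?orbT.
Qed.

End KillingHomology.

Lemma det_mx2 (R : comPzRingType) (A : 'M[R]_2) :
  \det A = A 0 0 * A 1 1 - A 0 1 * A 1 0.
Proof.
rewrite (expand_det_row _ 0) /cofactor !big_ord_recr big_ord0 /= !det_mx11 !mxE /=.
have -> : widen_ord (leqnSn 1) ord_max = 0 :> 'I_2 by apply: val_inj.
have -> : lift 0 (0 : 'I_1) = 1 :> 'I_2 by apply: val_inj.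
have -> : lift ord_max (0 : 'I_1) = 0 :> 'I_2 by apply: val_inj.
have -> : ord_max = 1 :> 'I_2 by apply: val_inj.
by rewrite expr0 expr1; ring.
Qed.

Lemma det_mxl3 (R : comPzRingType) (x11 x12 x13 x21 x22 x23 x31 x32 x33 : R) :
  \det (mxl 3 3 [:: [:: x11; x12; x13]; [:: x21; x22; x23]; [:: x31; x32; x33]]) =
  x11 * (x22 * x33 - x23 * x32) - x12 * (x21 * x33 - x23 * x31)
    + x13 * (x21 * x32 - x22 * x31).
Proof.
rewrite (expand_det_row _ 0) /cofactor !big_ord_recr big_ord0 /=.
rewrite !(expand_det_row _ 0) /cofactor !big_ord_recr !big_ord0 /= !det_mx11 !mxE /=.
ring.
Qed.

Ltac ord_cases i := case: i => [] [|[|[|[|[|[|?]]]]]] //= ?.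

Section ExplicitComplex.
Context {R : comPzRingType}.
Context {a11 a12 a13 a21 a22 a23 l11 l12 l13 l21 l22 l23 p12 p13 p23 z1 z2 : R}.

Local Notation Q1 := (q1 a11 a12 a13 a21 a22 a23 l11 l12 l13 l21 l22 l23 p12 p13 p23 z1 z2).
Local Notation Q2 := (q2 a11 a12 a13 a21 a22 a23 l11 l12 l13 l21 l22 l23 p12 p13 p23 z1 z2).
Local Notation Q3 := (q3 a11 a12 a13 a21 a22 a23 l11 l12 l13 l21 l22 l23 p12 p13 p23 z1 z2).
Local Notation N := (Nq a11 a12 a13 a21 a22 a23 l11 l12 l13 l21 l22 l23).

Ltac expand_q1 :=
  rewrite /q1 /g1 /g2 /g3 /g4 /g5 /PAv det_mxl3 det_mx2 /Nq /Amx /Lmx /Pmx.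

Ltac expand_entries := rewrite /mxl; do 3 rewrite ?mxE ?big_ord_recr ?big_ord0 /=.

Lemma q1_mul_q2 : Q1 *m Q2 = 0.
Proof.
apply/matrixP => i k; expand_q1; expand_entries.
ord_cases i; ord_cases k; expand_entries; ring.
Qed.

Lemma q2_mul_q3 : Q2 *m Q3 = 0.
Proof.
apply/matrixP => i k; expand_entries.
ord_cases i; ord_cases k; expand_entries; ring.
Qed.

Definition homotopy3 (j : 'I_5) : 'M[R]_(2, 6) := mxl 2 6 (nth [::] [::
  [:: [:: 0; z2; 0; - l21; - l22; - l23];
      [:: - z2; 0; 0; l11; l12; l13]];
  [:: [:: 0; - p23; - l21; 0; - a23; a22];
      [:: p23; 0; l11; 0; a13; - a12]];
  [:: [:: 0; p13; - l22; a23; 0; - a21];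
      [:: - p13; 0; l12; - a13; 0; a11]];
  [:: [:: 0; - p12; - l23; - a22; a21; 0];
      [:: p12; 0; l13; a12; - a11; 0]];
  [:: [:: - (a21 * l21 + a22 * l22 + a23 * l23);
          a11 * l21 + a12 * l22 + a13 * l23 + z1; 0; 0; 0; 0];
      [:: a21 * l11 + a22 * l12 + a23 * l13 - z1;
          - (a11 * l11 + a12 * l12 + a13 * l13); 0; 0; 0; 0]]]
  j).

Definition homotopy2 (j : 'I_5) : 'M[R]_(6, 5) := mxl 6 5 (nth [::] [::
  [:: [:: 0; l11; l12; l13; 0];
      [:: 0; l21; l22; l23; 0];
      [:: 0; - p23; p13; - p12; z1 + N];
      [:: 0; z2; 0; 0; l12 * l23 - l13 * l22];
      [:: 0; 0; z2; 0; l13 * l21 - l11 * l23];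
      [:: 0; 0; 0; z2; l11 * l22 - l12 * l21]];
  [:: [:: - l11; 0; a13; - a12; 0];
      [:: - l21; 0; a23; - a22; 0];
      [:: p23; 0; 0; 0; a12 * a23 - a13 * a22];
      [:: - z2; 0; - p13; p12; a21 * l11 - a11 * l21 - z1];
      [:: 0; 0; - p23; 0; a22 * l11 - a12 * l21];
      [:: 0; 0; 0; - p23; a23 * l11 - a13 * l21]];
  [:: [:: - l12; - a13; 0; a11; 0];
      [:: - l22; - a23; 0; a21; 0];
      [:: - p13; 0; 0; 0; a13 * a21 - a11 * a23];
      [:: 0; p13; 0; 0; a21 * l12 - a11 * l22];
      [:: - z2; p23; 0; p12; a22 * l12 - a12 * l22 - z1];
      [:: 0; 0; 0; p13; a23 * l12 - a13 * l22]];
  [:: [:: - l13; a12; - a11; 0; 0];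
      [:: - l23; a22; - a21; 0; 0];
      [:: p12; 0; 0; 0; a11 * a22 - a12 * a21];
      [:: 0; - p12; 0; 0; a21 * l13 - a11 * l23];
      [:: 0; 0; - p12; 0; a22 * l13 - a12 * l23];
      [:: - z2; p23; - p13; 0; a23 * l13 - a13 * l23 - z1]];
  [:: [:: 0; 0; 0; 0; 0];
      [:: 0; 0; 0; 0; 0];
      [:: - (z1 + N); a13 * a22 - a12 * a23; a11 * a23 - a13 * a21;
          a12 * a21 - a11 * a22; 0];
      [:: l13 * l22 - l12 * l23; z1 + a11 * l21 - a21 * l11;
          a11 * l22 - a21 * l12; a11 * l23 - a21 * l13; 0];
      [:: l11 * l23 - l13 * l21; a12 * l21 - a22 * l11;
          z1 + a12 * l22 - a22 * l12; a12 * l23 - a22 * l13; 0];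
      [:: l12 * l21 - l11 * l22; a13 * l21 - a23 * l11;
          a13 * l22 - a23 * l12; z1 + a13 * l23 - a23 * l13; 0]]]
  j).

Lemma homotopy3_q3 j : homotopy3 j *m Q3 = (Q1 0 j)%:M.
Proof.
apply/matrixP => i k; rewrite /homotopy3; expand_q1; expand_entries.
ord_cases j; ord_cases i; ord_cases k; expand_entries; ring.
Qed.

Lemma homotopy2_q2 j : Q3 *m homotopy3 j + homotopy2 j *m Q2 = (Q1 0 j)%:M.
Proof.
apply/matrixP => i k; rewrite /homotopy3 /homotopy2; expand_q1; expand_entries.
ord_cases j; ord_cases i; ord_cases k; expand_entries; ring.
Qed.

Lemma homotopy1_q1 j : Q2 *m homotopy2 j + delta_mx j 0 *m Q1 = (Q1 0 j)%:M.
Proof.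
apply/matrixP => i k; rewrite /homotopy2; expand_q1; expand_entries.
ord_cases j; ord_cases i; ord_cases k; expand_entries; ring.
Qed.

Lemma kills_homology_q1 x :
  in_ideal [seq Q1 ord0 j | j <- enum 'I_5] x -> kills_homology Q1 Q2 Q3 x.
Proof.
apply: kills_homology_in_ideal => _ /mapP[j _ ->].
exact: kills_homology_of_homotopy (homotopy3_q3 j) (homotopy2_q2 j) (homotopy1_q1 j).
Qed.

End ExplicitComplex.

Theorem theorem3p5 (R : comPzRingType)
  (a11 a12 a13 a21 a22 a23 l11 l12 l13 l21 l22 l23 p12 p13 p23 z1 z2 : R) :
  noetherian R ->
  let Q1 := q1 a11 a12 a13 a21 a22 a23 l11 l12 l13 l21 l22 l23 p12 p13 p23 z1 z2 in
  let Q2 := q2 a11 a12 a13 a21 a22 a23 l11 l12 l13 l21 l22 l23 p12 p13 p23 z1 z2 in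
  let Q3 := q3 a11 a12 a13 a21 a22 a23 l11 l12 l13 l21 l22 l23 p12 p13 p23 z1 z2 in
  [/\ Q1 *m Q2 = 0, Q2 *m Q3 = 0 &
      grade_ge (in_ideal [seq Q1 ord0 j | j <- enum 'I_5]) 3 ->
      acyclic3 Q1 Q2 Q3].
Proof.
move=> _ Q1 Q2 Q3; split=> [||grade]; [exact: q1_mul_q2 | exact: q2_mul_q3 |].
exact (acyclic3_of_grade_killers q1_mul_q2 q2_mul_q3 kills_homology_q1 grade).
Qed.
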